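(* Let $A$ be a set and let $\mathcal{E}$ be a set of subsets of $A$ such that (C1) for every $K\subseteq A$, $K\in\mathcal{E}$ if and only if $A\setminus K\notin\mathcal{E}$; and (C2) if $K\in\mathcal{E}$ and $K\subseteq L\subseteq A$, then $L\in\mathcal{E}$. Suppose each member of $A$ chooses one of the six strict total orders on three candidates $a,b,c$, labelled by $\mathbb{Z}/6\mathbb{Z}$ as: $1: a>b>c$, $2: a>c>b$, $3: c>a>b$, $4: c>b>a$, $5: b>c>a$, $6: b>a>c$. For $p\in\mathbb{Z}/6\mathbb{Z}$ let $K(p)$ be the set of members who chose ranking $p$, and $K(p,q,r)=K(p)\cup K(q)\cup K(r)$. Define the collective preference by: for distinct candidates $x,y$, $x$ is collectively preferred to $y$ iff the set of members who rank $x$ above $y$ belongs to $\mathcal{E}$. If (V) there exists $p$ such that $K(p,p+1,p+2)\in\mathcal{E}$ and $K(p+1,p+2,p+3)\in\mathcal{E}$, then the collective preference is a strict total order on $\{a,b,c\}$.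
   Context: Indices are taken modulo $6$. By (C1), for each pair of distinct candidates exactly one of the two collective preferences holds. *)

From Stdlib Require Import Arith.

Inductive cand : Type := ca | cb | cc.

(* position (0 = top) of candidate x in ranking with label r (taken mod 6).
   Labels: 1: a>b>c, 2: a>c>b, 3: c>a>b, 4: c>b>a, 5: b>c>a, 6 (= 0 mod 6): b>a>c. *)
Definition pos (r : nat) (x : cand) : nat :=
  match r mod 6, x with
  | 1, ca => 0 | 1, cb => 1 | 1, cc => 2
  | 2, ca => 0 | 2, cc => 1 | 2, cb => 2
  | 3, cc => 0 | 3, ca => 1 | 3, cb => 2
  | 4, cc => 0 | 4, cb => 1 | 4, ca => 2
  | 5, cb => 0 | 5, cc => 1 | 5, ca => 2
  | _, cb => 0 | _, ca => 1 | _, cc => 2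
  end.

Definition ranks_above (r : nat) (x y : cand) : Prop := pos r x < pos r y.

Definition K {A : Type} (prof : A -> nat) (p : nat) : A -> Prop :=
  fun i => prof i mod 6 = p mod 6.

Definition K3 {A : Type} (prof : A -> nat) (p q r : nat) : A -> Prop :=
  fun i => K prof p i \/ K prof q i \/ K prof r i.

Definition collective_pref {A : Type} (E : (A -> Prop) -> Prop)
  (prof : A -> nat) (x y : cand) : Prop :=
  x <> y /\ E (fun i => ranks_above (prof i) x y).

Definition strict_total_order {T : Type} (R : T -> T -> Prop) : Prop :=
  (forall x, ~ R x x) /\
  (forall x y z, R x y -> R y z -> R x z) /\
  (forall x y, x <> y -> R x y \/ R y x).

(* For distinct candidates x and y, the members ranking x above y are those
   whose label lies in an arc of three consecutive labels, and reversing the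
   pair gives the complementary, opposite arc. By (C1) and (C2) the family E
   never contains two disjoint sets, and if it misses K it contains every
   superset of the complement of K; hence the collective preference is asymmetric and complete.
   A cycle x > y > z > x would put into E three arcs starting at labels of one
   parity. By (V), E contains the arcs starting at p and p + 1, so E misses
   the opposite arcs starting at p + 3 and p + 4; one of these has the parity
   of the cycle and is therefore one of its arcs, a contradiction. *)

From Stdlib Require Import Arith Lia ZifyNat Classical.

Definition arc (p r : nat) : Prop :=
  r mod 6 = p mod 6 \/ r mod 6 = (p + 1) mod 6 \/ r mod 6 = (p + 2) mod 6.

(* Label 6 is written 0. The value on the diagonal is junk: no ranking places
   x above itself. *)
Definition above_arc (x y : cand) : nat :=
  match x, y with
  | ca, cb => 1 | cc, cb => 2 | cc, ca => 3
  | cb, ca => 4 | cb, cc => 5 | _, _ => 0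
  end.

Definition opposite_consecutive (p q : nat) : Prop :=
  q mod 6 = (p + 3) mod 6 \/ q mod 6 = (p + 4) mod 6.

Lemma ranks_above_asym r x y : ranks_above r x y -> ~ ranks_above r y x.
Proof. unfold ranks_above; lia. Qed.

Lemma ranks_above_total r x y :
  x <> y -> ranks_above r x y \/ ranks_above r y x.
Proof.
  intros Hxy; unfold ranks_above, pos.
  destruct x, y; try congruence; destruct (r mod 6) as [|[|[|[|[|[|]]]]]]; lia.
Qed.

Lemma ranks_above_arc r x y : ranks_above r x y -> arc (above_arc x y) r.
Proof.
  unfold ranks_above, pos, arc.
  pose proof (Nat.mod_upper_bound r 6 ltac:(discriminate)).
  destruct (r mod 6) as [|[|[|[|[|[|m]]]]]]; destruct x, y; simpl; lia.
Qed.

Lemma arc_opposite_disjoint p q r :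
  q mod 6 = (p + 3) mod 6 -> arc p r -> ~ arc q r.
Proof. unfold arc; lia. Qed.

(* The three arcs of a cycle start at labels of one parity, whereas p + 3 and
   p + 4 have different parities. *)
Lemma above_arc_cycle_opposite x y z p :
  x <> y -> y <> z -> z <> x ->
  opposite_consecutive p (above_arc x y) \/
  opposite_consecutive p (above_arc y z) \/
  opposite_consecutive p (above_arc z x).
Proof.
  unfold opposite_consecutive.
  destruct x, y, z; try congruence; cbn [above_arc]; lia.
Qed.

Section CollectivePreference.

Variables (A : Type) (E : (A -> Prop) -> Prop) (prof : A -> nat).
Hypothesis C1 : forall K : A -> Prop, E K <-> ~ E (fun i => ~ K i).
Hypothesis C2 : forall K L : A -> Prop, E K -> (forall i, K i -> L i) -> E L.

Lemma E_disjoint K L : E K -> E L -> ~ (forall i, K i -> ~ L i).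
Proof.
  intros EK EL KL; apply (proj1 (C1 K) EK).
  apply (C2 _ _ EL); intros i Li Ki; exact (KL i Ki Li).
Qed.

Lemma E_cover K L : (forall i, K i \/ L i) -> E K \/ E L.
Proof.
  intros KL; destruct (classic (E K)) as [EK|nEK]; [now left | right].
  assert (EnK : E (fun i => ~ K i)).
  { apply C1; intros EnnK; apply nEK, (C2 _ _ EnnK); intros i; apply NNPP. }
  apply (C2 _ _ EnK); intros i nKi; destruct (KL i); tauto.
Qed.

Local Notation pref := (collective_pref E prof).

Lemma collective_pref_asym x y : pref x y -> ~ pref y x.
Proof.
  intros [_ Exy] [_ Eyx]; apply (E_disjoint _ _ Exy Eyx).
  intros i; apply ranks_above_asym.
Qed.

Lemma collective_pref_total x y : x <> y -> pref x y \/ pref y x.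
Proof.
  intros Hxy; unfold collective_pref.
  destruct (E_cover (fun i => ranks_above (prof i) x y)
                    (fun i => ranks_above (prof i) y x)); auto.
  intros i; apply ranks_above_total; exact Hxy.
Qed.

Lemma E_above_arc x y :
  E (fun i => ranks_above (prof i) x y) -> E (fun i => arc (above_arc x y) (prof i)).
Proof. intros Exy; apply (C2 _ _ Exy); intros i; apply ranks_above_arc. Qed.

Variable p : nat.
Hypothesis Varc0 : E (fun i => arc p (prof i)).
Hypothesis Varc1 : E (fun i => arc (p + 1) (prof i)).

Lemma E_opposite_consecutive_arc q :
  opposite_consecutive p q -> ~ E (fun i => arc q (prof i)).
Proof.
  intros [Hq | Hq] Eq.
  - apply (E_disjoint _ _ Varc0 Eq); intros i; now apply arc_opposite_disjoint.
  - apply (E_disjoint _ _ Varc1 Eq); intros i; apply arc_opposite_disjoint; lia.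
Qed.

Lemma collective_pref_acyclic x y z : pref x y -> pref y z -> ~ pref z x.
Proof.
  intros [Hxy Exy] [Hyz Eyz] [Hzx Ezx].
  destruct (above_arc_cycle_opposite x y z p Hxy Hyz Hzx) as [H | [H | H]];
    eapply E_opposite_consecutive_arc; eauto using E_above_arc.
Qed.

Lemma collective_pref_trans x y z : pref x y -> pref y z -> pref x z.
Proof.
  intros Pxy Pyz; destruct (classic (x = z)) as [<- | Hxz].
  - exfalso; exact (collective_pref_asym _ _ Pxy Pyz).
  - destruct (collective_pref_total x z Hxz) as [Pxz | Pzx]; auto.
    exfalso; exact (collective_pref_acyclic _ _ _ Pxy Pyz Pzx).
Qed.

End CollectivePreference.

Theorem mainTheorem3 (A : Type) (E : (A -> Prop) -> Prop) (prof : A -> nat)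
  (C1 : forall K : A -> Prop, E K <-> ~ E (fun i => ~ K i))
  (C2 : forall K L : A -> Prop, E K -> (forall i, K i -> L i) -> E L)
  (V : exists p : nat, E (K3 prof p (p + 1) (p + 2)) /\
                       E (K3 prof (p + 1) (p + 2) (p + 3))) :
  strict_total_order (collective_pref E prof).
Proof.
  destruct V as [p [Varc0 V1]].
  assert (Varc1 : E (fun i => arc (p + 1) (prof i))).
  { apply (C2 _ _ V1); intros i; unfold K3, K, arc.
    now rewrite <- !Nat.add_assoc. }
  split; [| split].
  - intros x [Hxx _]; now apply Hxx.
  - exact (collective_pref_trans A E prof C1 C2 p Varc0 Varc1).
  - exact (collective_pref_total A E prof C1 C2).
Qed.
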